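(* For all $n,m,N\in\mathbb{Z}$ the following bilinear equations hold: \begin{align*} &\tau^{n,m}_{N+1}\tau^{n+1,m+1}_{N} -Q^{-3n+3m+2N-2}\gamma^{2}{\alpha_1}^{3}\tau^{n+1,m}_{N}\tau^{n,m+1}_{N+1} +Q^{-6n+6m+4N-4}\gamma^{4}{\alpha_1}^{6}\tau^{n,m}_{N}\tau^{n+1,m+1}_{N+1}=0,\\ &\tau^{n+1,m}_{N+1}\tau^{n,m}_{N} -Q^{-3m+2N+1}\gamma^{2}{\alpha_2}^{3}\tau^{n+1,m+1}_{N}\tau^{n,m-1}_{N+1} +Q^{-6m+4N+2}\gamma^{4}{\alpha_2}^{6}\tau^{n+1,m}_{N}\tau^{n,m}_{N+1}=0,\\ &\tau^{n+1,m+1}_{N+1}\tau^{n+1,m}_{N} -Q^{3n+2N+4}\gamma^{2}{\alpha_0}^{3}\tau^{n,m}_{N}\tau^{n+2,m+1}_{N+1} +Q^{6n+4N+8}\gamma^{4}{\alpha_0}^{6}\tau^{n+1,m+1}_{N}\tau^{n+1,m}_{N+1}=0,\\ &\tau^{n+1,m+1}_{N+1}\tau^{n,m}_{N} -Q^{-3n+3m-2N-4}\gamma^{-2}{\alpha_1}^{3}\tau^{n+1,m}_{N+1}\tau^{n,m+1}_{N} +Q^{-6n+6m-4N-8}\gamma^{-4}{\alpha_1}^{6}\tau^{n+1,m+1}_{N}\tau^{n,m}_{N+1}=0,\\ &\tau^{n,m}_{N+1}\tau^{n+1,m}_{N} -Q^{-3m-2N-1}\gamma^{-2}{\alpha_2}^{3}\tau^{n+1,m+1}_{N+1}\tau^{n,m-1}_{N}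 +Q^{-6m-4N-2}\gamma^{-4}{\alpha_2}^{6}\tau^{n,m}_{N}\tau^{n+1,m}_{N+1}=0,\\ &\tau^{n+1,m}_{N+1}\tau^{n+1,m+1}_{N} -Q^{3n-2N+2}\gamma^{-2}{\alpha_0}^{3}\tau^{n,m}_{N+1}\tau^{n+2,m+1}_{N} +Q^{6n-4N+4}\gamma^{-4}{\alpha_0}^{6}\tau^{n+1,m}_{N}\tau^{n+1,m+1}_{N+1}=0. \end{align*}
   Context: Let $Q\in\mathbb{C}^\times$ be generic and let $\alpha_0,\alpha_1,\gamma$ be indeterminates; put $\alpha_2:=Q\alpha_0^{-1}\alpha_1^{-1}$, so $\alpha_0\alpha_1\alpha_2=Q$ (sixth roots of the usual parameters: $q=Q^6$, $a_i=\alpha_i^6$, $c=\gamma^6$). Let $\tau_i,\bar\tau_i$ ($i\in\mathbb{Z}/3\mathbb{Z}$) be six further indeterminates and $K=\mathbb{C}(\alpha_0,\alpha_1,\gamma,\tau_0,\tau_1,\tau_2,\bar\tau_0,\bar\tau_1,\bar\tau_2)$. Indices are taken mod 3. Define field automorphisms $s_0,s_1,s_2,\pi,w_0,w_1,r$ of $K$ (fixing $\mathbb{C}$): on parameters $s_i(\alpha_i)=\alpha_i^{-1}$, $s_i(\alpha_j)=\alpha_j\alpha_i$ ($j\neq i$), $\pi(\alpha_j)=\alpha_{j+1}$, $s_i(\gamma)=\pi(\gamma)=\gamma$; $w_0,w_1,r$ fix every $\alpha_j$, and $w_0(\gamma)=\gamma^{-1}$, $w_1(\gamma)=Q^{-2}\gamma^{-1}$,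 $r(\gamma)=Q^{-1}\gamma^{-1}$. With $u_i=Q^{-2}\gamma^{-4}\alpha_i^6$, $v_i=Q^{2}\gamma^{4}\alpha_i^6$: $s_i(\tau_i)=\dfrac{u_i\tau_{i+1}\bar\tau_{i-1}+\bar\tau_{i+1}\tau_{i-1}}{Q^{-1}\gamma^{-2}\alpha_i^{3}\,\bar\tau_i}$, $s_i(\bar\tau_i)=\dfrac{v_i\bar\tau_{i+1}\tau_{i-1}+\tau_{i+1}\bar\tau_{i-1}}{Q\gamma^{2}\alpha_i^{3}\,\tau_i}$, $s_i$ fixes $\tau_j,\bar\tau_j$ ($j\ne i$); $\pi(\tau_i)=\tau_{i+1}$, $\pi(\bar\tau_i)=\bar\tau_{i+1}$; $w_0(\tau_i)=\tau_i$, $w_0(\bar\tau_i)=\dfrac{\alpha_{i+1}^2(\bar\tau_i\tau_{i+1}\tau_{i+2}+u_{i-1}\tau_i\bar\tau_{i+1}\tau_{i+2}+u_{i+1}^{-1}\tau_i\tau_{i+1}\bar\tau_{i+2})}{\alpha_{i+2}^2\,\bar\tau_{i+1}\bar\tau_{i+2}}$; $w_1(\bar\tau_i)=\bar\tau_i$, $w_1(\tau_i)=\dfrac{\alpha_{i+1}^2(\tau_i\bar\tau_{i+1}\bar\tau_{i+2}+v_{i-1}\bar\tau_i\tau_{i+1}\bar\tau_{i+2}+v_{i+1}^{-1}\bar\tau_i\bar\tau_{i+1}\tau_{i+2})}{\alpha_{i+2}^2\,\tau_{i+1}\tau_{i+2}}$; $r(\tau_i)=\bar\tau_i$, $r(\bar\tau_i)=\tau_i$.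 Products of generators denote composition ($xy=x\circ y$). Set $T_1=\pi s_2s_1$, $T_2=s_1\pi s_2$, $T_4=rw_0$ (these commute), and define $\tau^{n,m}_N=T_1^{\,n}T_2^{\,m}T_4^{\,N}(\tau_1)$ for $n,m,N\in\mathbb{Z}$. *)

From HB Require Import structures.
From mathcomp Require Import all_boot all_order all_algebra.
From mathcomp Require Import mpoly.
Set Implicit Arguments. Unset Strict Implicit. Unset Printing Implicit Defensive.
Import Order.TTheory GRing.Theory Num.Theory.
Local Open Scope ring_scope.

Section B6.
Variable C : numClosedFieldType.

(* K = C(Q, alpha0, alpha1, gamma, tau0, tau1, tau2, taub0, taub1, taub2):
   the field of rational functions in 10 indeterminates over C.
   (Q is treated as an indeterminate: this encodes "Q generic") *)
Definition K := {fraction {mpoly C[10]}}.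

Definition Gen (k : nat) : K := tofrac ('X_(inord k) : {mpoly C[10]}).
Definition cst (c : C) : K := tofrac (c%:MP : {mpoly C[10]}).

Definition Qv : K := Gen 0.
Definition gam : K := Gen 3.
Definition alpha (i : 'I_3) : K :=
  if val i == 0%N then Gen 1 else if val i == 1%N then Gen 2
  else Qv / (Gen 1 * Gen 2).
Definition tau (i : 'I_3) : K := Gen (4 + i).
Definition taub (i : 'I_3) : K := Gen (7 + i).

Definition u (i : 'I_3) : K := Qv ^- 2 * gam ^- 4 * alpha i ^+ 6.
Definition v (i : 'I_3) : K := Qv ^+ 2 * gam ^+ 4 * alpha i ^+ 6.

Definition autK (f : {rmorphism K -> K}) (finv : K -> K) : Prop :=
  [/\ cancel f finv, cancel finv f & forall c : C, f (cst c) = cst c].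

(* Q is an element of the base field, hence fixed by all the automorphisms *)
Definition sB6_spec (s : {rmorphism K -> K}) (i : 'I_3) : Prop :=
  [/\ s Qv = Qv, s gam = gam,
      s (alpha i) = (alpha i)^-1 &
      forall j, j != i -> s (alpha j) = alpha j * alpha i] /\
  [/\
      s (tau i) = (u i * tau (i + 1) * taub (i - 1) + taub (i + 1) * tau (i - 1))
                   / (Qv^-1 * gam ^- 2 * alpha i ^+ 3 * taub i),
      s (taub i) = (v i * taub (i + 1) * tau (i - 1) + tau (i + 1) * taub (i - 1))
                   / (Qv * gam ^+ 2 * alpha i ^+ 3 * tau i)
    & forall j, j != i -> s (tau j) = tau j /\ s (taub j) = taub j].

Definition piB6_spec (p : {rmorphism K -> K}) : Prop :=
  [/\ p Qv = Qv, p gam = gam,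
      forall j, p (alpha j) = alpha (j + 1),
      forall j, p (tau j) = tau (j + 1)
    & forall j, p (taub j) = taub (j + 1)].

Definition w0B6_spec (w : {rmorphism K -> K}) : Prop :=
  [/\ w Qv = Qv, forall j, w (alpha j) = alpha j,
      w gam = gam^-1,
      forall i, w (tau i) = tau i
    & forall i, w (taub i) =
        alpha (i + 1) ^+ 2 * (taub i * tau (i + 1) * tau (i + 2)
                             + u (i - 1) * tau i * taub (i + 1) * tau (i + 2)
                             + (u (i + 1))^-1 * tau i * tau (i + 1) * taub (i + 2))
        / (alpha (i + 2) ^+ 2 * taub (i + 1) * taub (i + 2))].

Definition w1B6_spec (w : {rmorphism K -> K}) : Prop :=
  [/\ w Qv = Qv, forall j, w (alpha j) = alpha j,
      w gam = Qv ^- 2 * gam^-1,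
      forall i, w (taub i) = taub i
    & forall i, w (tau i) =
        alpha (i + 1) ^+ 2 * (tau i * taub (i + 1) * taub (i + 2)
                             + v (i - 1) * taub i * tau (i + 1) * taub (i + 2)
                             + (v (i + 1))^-1 * taub i * taub (i + 1) * tau (i + 2))
        / (alpha (i + 2) ^+ 2 * tau (i + 1) * tau (i + 2))].

Definition rB6_spec (r : {rmorphism K -> K}) : Prop :=
  [/\ r Qv = Qv, forall j, r (alpha j) = alpha j,
      r gam = Qv^-1 * gam^-1,
      forall i, r (tau i) = taub i
    & forall i, r (taub i) = tau i].

Definition powz (f finv : K -> K) (z : int) : K -> K :=
  match z with
  | Posz n => iter n f
  | Negz n => iter n.+1 finv
  end.

(* tau^{n,m}_N = T1^n T2^m T4^N (tau_1), with T1 = pi s2 s1, T2 = s1 pi s2,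
   T4 = r w0 (composition xy = x o y) *)
Definition tauNM (s : 'I_3 -> {rmorphism K -> K}) (si : 'I_3 -> K -> K)
    (p : {rmorphism K -> K}) (pinv : K -> K)
    (w0 : {rmorphism K -> K}) (w0inv : K -> K)
    (r : {rmorphism K -> K}) (rinv : K -> K) (n m N : int) : K :=
  let s1 := s (inord 1) in let s2 := s (inord 2) in
  let s1i := si (inord 1) in let s2i := si (inord 2) in
  let T1 := fun x => p (s2 (s1 x)) in
  let T1i := fun x => s1i (s2i (pinv x)) in
  let T2 := fun x => s1 (p (s2 x)) in
  let T2i := fun x => s2i (pinv (s1i x)) in
  let T4 := fun x => r (w0 x) in
  let T4i := fun x => w0inv (rinv x) in
  powz T1 T1i n (powz T2 T2i m (powz T4 T4i N (tau (inord 1)))).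

End B6.

From Pilot Require Import Defs.
From HB Require Import structures.
From mathcomp Require Import all_boot all_order all_algebra.
From mathcomp Require Import mpoly ring.
Set Implicit Arguments. Unset Strict Implicit. Unset Printing Implicit Defensive.
Import Order.TTheory GRing.Theory Num.Theory.
Local Open Scope ring_scope.

(** The translations T1 = pi s2 s1, T2 = s1 pi s2 and T4 = r w0 commute, because the
    generators satisfy the relations of the extended affine Weyl group: s_i^2 = 1, the braid
    relations, pi s_i = s_(i+1) pi, and r, w0 commute with the s_i and with pi.  Each relation
    is an identity between ring endomorphisms, hence is checked on the generators
    Q, gamma, alpha_j, tau_j, taubar_j.  So T1^a T2^b T4^c is an action of Z^3, and
    tau^(n,m)_N is the orbit of tau_1.  On the parameters the translations act by powers of
    Q: T1 sends alpha0, alpha1 to Q alpha0, Q^-1 alpha1, T2 sends alpha1, alpha2 to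
    Q alpha1, Q^-1 alpha2, and T4 sends gamma to Q gamma.
    Near the origin tau^(a,b)_c runs through tau_j, taubar_j, s_i tau_i and s_i taubar_i
    (e.g. tau^(-1,0)_1 = taubar_0, tau^(-1,1)_0 = s_1 tau_1, tau^(1,1)_1 = s_0 taubar_0), so the
    formulas defining s_i tau_i and s_i taubar_i, written as three-term relations, are the
    six equations at (n,m,N) = (-1,0,0).
    Applying the automorphism T1^(n+1) T2^m T4^N gives them at (n,m,N), the coefficients
    being rescaled through the action on Q, gamma and alpha. *)

Section RingEndomorphisms.
Variable R : pzSemiRingType.

Lemma can_nmod_morphism (f : {rmorphism R -> R}) (finv : R -> R) :
  cancel f finv -> cancel finv f -> nmod_morphism finv.
Proof.
move=> fK fKV; split=> [|x y]; first by rewrite -{1}(rmorph0 f) fK.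
by rewrite -{1}(fKV x) -{1}(fKV y) -rmorphD fK.
Qed.

Lemma can_monoid_morphism (f : {rmorphism R -> R}) (finv : R -> R) :
  cancel f finv -> cancel finv f -> monoid_morphism finv.
Proof.
move=> fK fKV; split=> [|x y]; first by rewrite -{1}(rmorph1 f) fK.
by rewrite -{1}(fKV x) -{1}(fKV y) -rmorphM fK.
Qed.

Lemma iter_nmod_morphism (h : R -> R) n : nmod_morphism h -> nmod_morphism (iter n h).
Proof.
move=> [h0 hD]; elim: n => [|n [IH0 IHD]] //; split=> [|x y] /=; first by rewrite IH0.
by rewrite IHD hD.
Qed.

Lemma iter_monoid_morphism (h : R -> R) n :
  monoid_morphism h -> monoid_morphism (iter n h).
Proof.
move=> [h1 hM]; elim: n => [|n [IH1 IHM]] //; split=> [|x y] /=; first by rewrite IH1.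
by rewrite IHM hM.
Qed.

Definition pack_rmorphism (h : R -> R) (hD : nmod_morphism h) (hM : monoid_morphism h)
  : {rmorphism R -> R} :=
  HB.pack h (GRing.isNmodMorphism.Build R R h hD) (GRing.isMonoidMorphism.Build R R h hM).

End RingEndomorphisms.

Definition iterz (T : Type) (f finv : T -> T) (z : int) : T -> T :=
  match z with
  | Posz n => iter n f
  | Negz n => iter n.+1 finv
  end.

Section IntegerIterates.
Variable T : Type.

Lemma iterz0 (f finv : T -> T) x : iterz f finv 0 x = x. Proof. by []. Qed.

Section Bijection.
Variables (f finv : T -> T).
Hypotheses (fK : cancel f finv) (fKV : cancel finv f).

Lemma iterzS z x : iterz f finv (z + 1) x = f (iterz f finv z x).
Proof.
case: z => [n|[|n]]; first by rewrite -PoszD addn1.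
- by rewrite /= fKV.
- have -> : Negz n.+1 + 1 = Negz n by rewrite !NegzE -addn1 PoszD opprD addrNK.
  by rewrite /= fKV.
Qed.

Lemma iterzB1 z x : iterz f finv (z - 1) x = finv (iterz f finv z x).
Proof. by rewrite -{2}(subrK 1 z) iterzS fK. Qed.

Lemma iterzD a b x : iterz f finv (a + b) x = iterz f finv a (iterz f finv b x).
Proof.
elim/int_rec: a => [|n IH|n IH]; first by rewrite add0r.
- by rewrite -[n.+1]addn1 PoszD addrAC !iterzS IH.
- by rewrite -[n.+1]addn1 PoszD opprD addrAC !iterzB1 IH.
Qed.

Lemma iterz_fix y : f y = y -> forall z, iterz f finv z y = y.
Proof.
move=> fy; have finvy : finv y = y by rewrite -{1}fy fK.
by case=> n /=; elim: n => [|n IH] //=; rewrite IH.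
Qed.

End Bijection.

Lemma iterz_commute (u h hinv : T -> T) :
  cancel h hinv -> cancel hinv h -> (forall x, u (h x) = h (u x)) ->
  forall z x, u (iterz h hinv z x) = iterz h hinv z (u x).
Proof.
move=> hK hKV uh; have uhinv y : u (hinv y) = hinv (u y).
  by apply: (canRL hK); rewrite -uh hKV.
case=> n x /=.
- by elim: n => [|n IH] //=; rewrite uh IH.
- by elim: n => [|n IH] /=; rewrite uhinv ?IH.
Qed.

Lemma iterz_comm (f finv h hinv : T -> T) :
  cancel f finv -> cancel finv f -> cancel h hinv -> cancel hinv h ->
  (forall x, f (h x) = h (f x)) ->
  forall a b x, iterz f finv a (iterz h hinv b x) = iterz h hinv b (iterz f finv a x).
Proof.
move=> fK fKV hK hKV fh a b x; apply: iterz_commute => // y.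
by rewrite (iterz_commute fK fKV (fun y => esym (fh y))).
Qed.

End IntegerIterates.

Section RingAutomorphism.
Variables (F : fieldType) (f : {rmorphism F -> F}) (finv : F -> F).
Hypotheses (fK : cancel f finv) (fKV : cancel finv f).

Lemma iterz_nmod_morphism z : nmod_morphism (iterz f finv z).
Proof.
case: z => n; apply: iter_nmod_morphism; last exact: can_nmod_morphism fK fKV.
by split=> [|x y]; rewrite ?rmorph0 ?rmorphD.
Qed.

Lemma iterz_monoid_morphism z : monoid_morphism (iterz f finv z).
Proof.
case: z => n; apply: iter_monoid_morphism; last exact: can_monoid_morphism fK fKV.
by split=> [|x y]; rewrite ?rmorph1 ?rmorphM.
Qed.

Definition iterz_rmorphism z : {rmorphism F -> F} :=
  pack_rmorphism (iterz_nmod_morphism z) (iterz_monoid_morphism z).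

Lemma iterz_scale k y : k != 0 -> f k = k -> f y = k * y ->
  forall z, iterz f finv z y = k ^ z * y.
Proof.
move=> k_neq0 fk fy; elim/int_rec => [|n IH|n IH]; first by rewrite expr0z mul1r.
- by rewrite -[n.+1]addn1 PoszD (iterzS fKV) IH rmorphM fmorphXz fk fy expfzDr // expr1z mulrA.
- rewrite -[n.+1]addn1 PoszD opprD (iterzB1 fK fKV) IH; apply: (canLR fK).
  by rewrite rmorphM fmorphXz fk fy mulrA -{3}[k]expr1z -expfzDr // subrK.
Qed.

End RingAutomorphism.

Lemma rmorph_three_term (F : fieldType) (phi : {rmorphism F -> F}) (k x1 y1 x2 y2 x3 y3 : F) :
  x1 * y1 - k * x2 * y2 + k ^+ 2 * x3 * y3 = 0 ->
  forall k' l, phi k = k' -> k' ^+ 2 = l ->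
  phi x1 * phi y1 - k' * phi x2 * phi y2 + l * phi x3 * phi y3 = 0.
Proof.
move=> /(congr1 phi) + k' l <- <-.
by rewrite rmorph0 rmorphD rmorphB !rmorphM.
Qed.

Section Monomials.
Variables (F : fieldType) (q : F).
Hypothesis q_neq0 : q != 0.

Lemma scale_monomial (x y : F) (e0 e c l : int) :
  e = e0 + 2 * c + 3 * l ->
  q ^ e0 * (q ^ c * x) ^+ 2 * (q ^ l * y) ^+ 3 = q ^ e * x ^+ 2 * y ^+ 3.
Proof.
move=> ->; rewrite [2 * c]mulrC [3 * l]mulrC !expfzDr // -!exprz_exp -!exprnP.
by rewrite !exprMn; ring.
Qed.

Lemma scale_monomialV (x y : F) (e0 e c l : int) :
  e = e0 - 2 * c + 3 * l ->
  q ^ e0 * ((q ^ c * x) ^+ 2)^-1 * (q ^ l * y) ^+ 3 = q ^ e * (x ^+ 2)^-1 * y ^+ 3.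
Proof.
move=> De; rewrite -!exprVn invfM invr_expz.
by apply: scale_monomial; rewrite De mulrN.
Qed.

Lemma sqr_monomial (x y : F) (e0 e : int) : e = 2 * e0 ->
  (q ^ e0 * x ^+ 2 * y ^+ 3) ^+ 2 = q ^ e * x ^+ 4 * y ^+ 6.
Proof. by move=> ->; rewrite [2 * e0]mulrC -exprz_exp -exprnP; ring. Qed.

Lemma sqr_monomialV (x y : F) (e0 e : int) : e = 2 * e0 ->
  (q ^ e0 * (x ^+ 2)^-1 * y ^+ 3) ^+ 2 = q ^ e * (x ^+ 4)^-1 * y ^+ 6.
Proof. by move=> ->; rewrite [2 * e0]mulrC -exprz_exp -exprnP -!exprVn; ring. Qed.

End Monomials.

Section Ord3.
Implicit Type i : 'I_3.

Lemma ord3_cases i j : [\/ j = i, j = i + 1 | j = i + 2].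
Proof.
case: i j => [[|[|[|//]]] ?] [[|[|[|//]]] ?];
  by [apply: Or31; apply/val_inj | apply: Or32; apply/val_inj | apply: Or33; apply/val_inj].
Qed.

Lemma ord3_add11 i : i + 1 + 1 = i + 2. Proof. by case: i => [[|[|[|//]]] ?]; apply/val_inj. Qed.
Lemma ord3_add21 i : i + 2 + 1 = i. Proof. by case: i => [[|[|[|//]]] ?]; apply/val_inj. Qed.
Lemma ord3_add12 i : i + 1 + 2 = i. Proof. by case: i => [[|[|[|//]]] ?]; apply/val_inj. Qed.
Lemma ord3_add22 i : i + 2 + 2 = i + 1. Proof. by case: i => [[|[|[|//]]] ?]; apply/val_inj. Qed.
Lemma ord3_subr1 i : i - 1 = i + 2. Proof. by case: i => [[|[|[|//]]] ?]; apply/val_inj. Qed.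
Lemma inord3_01 : (inord 0 : 'I_3) + 1 = inord 1. Proof. by apply: val_inj; rewrite /= !inordK. Qed.
Lemma inord3_02 : (inord 0 : 'I_3) + 2 = inord 2. Proof. by apply: val_inj; rewrite /= !inordK. Qed.
Lemma inord3_11 : (inord 1 : 'I_3) + 1 = inord 2. Proof. by apply: val_inj; rewrite /= !inordK. Qed.
Lemma inord3_12 : (inord 1 : 'I_3) + 2 = inord 0. Proof. by apply: val_inj; rewrite /= !inordK. Qed.
Lemma inord3_21 : (inord 2 : 'I_3) + 1 = inord 0. Proof. by apply: val_inj; rewrite /= !inordK. Qed.
Lemma inord3_22 : (inord 2 : 'I_3) + 2 = inord 1. Proof. by apply: val_inj; rewrite /= !inordK. Qed.
Lemma inord3_cases i : [\/ i = inord 0, i = inord 1 | i = inord 2].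
Proof.
by case: i => [[|[|[|//]]] ?]; [apply: Or31|apply: Or32|apply: Or33];
  apply: val_inj; rewrite /= inordK.
Qed.

Lemma inord3_neq (a b : nat) :
  (a < 3)%N -> (b < 3)%N -> a != b -> (inord a : 'I_3) != inord b.
Proof. by move=> a3 b3; apply: contra => /eqP/(congr1 val); rewrite /= !inordK // => ->. Qed.

Definition inord3E := (inord3_01, inord3_02, inord3_11, inord3_12, inord3_21, inord3_22).

Definition ord3E :=
  (ord3_add11, ord3_add21, ord3_add12, ord3_add22, ord3_subr1).

Lemma ord3_add1_neq i : i + 1 != i. Proof. by case: i => [[|[|[|//]]] ?]. Qed.
Lemma ord3_add2_neq i : i + 2 != i. Proof. by case: i => [[|[|[|//]]] ?]. Qed.
Lemma ord3_neq_add1 i : i != i + 1. Proof. by case: i => [[|[|[|//]]] ?]. Qed.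
Lemma ord3_neq_add2 i : i != i + 2. Proof. by case: i => [[|[|[|//]]] ?]. Qed.
Lemma ord3_add21_neq i : i + 2 != i + 1. Proof. by case: i => [[|[|[|//]]] ?]. Qed.
Lemma ord3_add12_neq i : i + 1 != i + 2. Proof. by case: i => [[|[|[|//]]] ?]. Qed.

End Ord3.

(** The specifications of the Defs file, over an arbitrary field [F] with constants [cst]
    and parameters [Q], [g], [al], [ta], [tb]; for [F := K C] they are convertible to the
    originals. *)
Section ActionSpecs.
Variables (F : fieldType) (Cst : Type) (cst : Cst -> F).
Variables (Q g : F) (al ta tb : 'I_3 -> F).

Definition u_coef i := Q ^- 2 * g ^- 4 * al i ^+ 6.
Definition v_coef i := Q ^+ 2 * g ^+ 4 * al i ^+ 6.

Definition aut_spec (f : {rmorphism F -> F}) (finv : F -> F) : Prop :=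
  [/\ cancel f finv, cancel finv f & forall c, f (cst c) = cst c].

Definition s_spec (s : {rmorphism F -> F}) (i : 'I_3) : Prop :=
  [/\ s Q = Q, s g = g, s (al i) = (al i)^-1 &
      forall j, j != i -> s (al j) = al j * al i] /\
  [/\ s (ta i) = (u_coef i * ta (i + 1) * tb (i - 1) + tb (i + 1) * ta (i - 1))
                   / (Q^-1 * g ^- 2 * al i ^+ 3 * tb i),
      s (tb i) = (v_coef i * tb (i + 1) * ta (i - 1) + ta (i + 1) * tb (i - 1))
                   / (Q * g ^+ 2 * al i ^+ 3 * ta i)
    & forall j, j != i -> s (ta j) = ta j /\ s (tb j) = tb j].

Definition rot_spec (p : {rmorphism F -> F}) : Prop :=
  [/\ p Q = Q, p g = g, forall j, p (al j) = al (j + 1),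
      forall j, p (ta j) = ta (j + 1) & forall j, p (tb j) = tb (j + 1)].

Definition w0_spec (w : {rmorphism F -> F}) : Prop :=
  [/\ w Q = Q, forall j, w (al j) = al j, w g = g^-1, forall i, w (ta i) = ta i
    & forall i, w (tb i) =
        al (i + 1) ^+ 2 * (tb i * ta (i + 1) * ta (i + 2)
          + u_coef (i - 1) * ta i * tb (i + 1) * ta (i + 2)
          + (u_coef (i + 1))^-1 * ta i * ta (i + 1) * tb (i + 2))
        / (al (i + 2) ^+ 2 * tb (i + 1) * tb (i + 2))].

Definition r_spec (r : {rmorphism F -> F}) : Prop :=
  [/\ r Q = Q, forall j, r (al j) = al j, r g = Q^-1 * g^-1,
      forall i, r (ta i) = tb i & forall i, r (tb i) = ta i].

Definition morph_determined : Prop :=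
  forall f h : {rmorphism F -> F},
  (forall c, f (cst c) = h (cst c)) -> f Q = h Q -> f g = h g ->
  (forall j, f (al j) = h (al j)) -> (forall j, f (ta j) = h (ta j)) ->
  (forall j, f (tb j) = h (tb j)) -> f =1 h.

Definition parameter_field : Prop :=
  [/\ [/\ Q != 0, g != 0, forall j, al j != 0, forall j, ta j != 0 & forall j, tb j != 0],
      forall i, al i * al (i + 1) * al (i + 2) = Q & morph_determined].

Definition B6_action (s : 'I_3 -> {rmorphism F -> F}) (si : 'I_3 -> F -> F)
    (p : {rmorphism F -> F}) (pinv : F -> F) (w0 : {rmorphism F -> F}) (w0inv : F -> F)
    (r : {rmorphism F -> F}) (rinv : F -> F) : Prop :=
  [/\ forall i, aut_spec (s i) (si i) /\ s_spec (s i) i, aut_spec p pinv /\ rot_spec p,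
      aut_spec w0 w0inv /\ w0_spec w0 & aut_spec r rinv /\ r_spec r].

End ActionSpecs.

Section Action.
Variables (F : fieldType) (Cst : Type) (cst : Cst -> F).
Variables (Q g : F) (al ta tb : 'I_3 -> F).

Variables (s : 'I_3 -> {rmorphism F -> F}) (si : 'I_3 -> F -> F)
  (p : {rmorphism F -> F}) (pinv : F -> F)
  (w0 : {rmorphism F -> F}) (w0inv : F -> F)
  (r : {rmorphism F -> F}) (rinv : F -> F).
Hypothesis params : parameter_field cst Q g al ta tb.
Hypothesis action : B6_action cst Q g al ta tb s si p pinv w0 w0inv r rinv.

Lemma Q_neq0 : Q != 0. Proof. by case: params => [[]]. Qed.
Lemma g_neq0 : g != 0. Proof. by case: params => [[]]. Qed.
Lemma al_neq0 j : al j != 0. Proof. by case: params => [[_ _ al0 _ _] _ _]; apply: al0. Qed.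
Lemma ta_neq0 j : ta j != 0. Proof. by case: params => [[_ _ _ ta0 _] _ _]; apply: ta0. Qed.
Lemma tb_neq0 j : tb j != 0. Proof. by case: params => [[_ _ _ _ tb0] _ _]; apply: tb0. Qed.
Lemma alM i : al i * al (i + 1) * al (i + 2) = Q. Proof. by case: params. Qed.
Lemma morph_eq : morph_determined cst Q g al ta tb. Proof. by case: params. Qed.

Lemma s_aut i : aut_spec cst (s i) (si i). Proof. by case: action => /(_ i) []. Qed.
Lemma s_rules i : s_spec Q g al ta tb (s i) i. Proof. by case: action => /(_ i) []. Qed.
Lemma p_aut : aut_spec cst p pinv. Proof. by case: action => _ []. Qed.
Lemma p_rules : rot_spec Q g al ta tb p. Proof. by case: action => _ []. Qed.
Lemma w0_aut : aut_spec cst w0 w0inv. Proof. by case: action => _ _ []. Qed.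
Lemma w0_rules : w0_spec Q g al ta tb w0. Proof. by case: action => _ _ []. Qed.
Lemma r_aut : aut_spec cst r rinv. Proof. by case: action => _ _ _ []. Qed.
Lemma r_rules : r_spec Q g al ta tb r. Proof. by case: action => _ _ _ []. Qed.

Lemma sK i : cancel (s i) (si i). Proof. by case: (s_aut i). Qed.
Lemma sKV i : cancel (si i) (s i). Proof. by case: (s_aut i). Qed.
Lemma s_cst i c : s i (cst c) = cst c. Proof. by case: (s_aut i). Qed.
Lemma s_Q i : s i Q = Q. Proof. by case: (s_rules i) => [[]]. Qed.
Lemma s_gam i : s i g = g. Proof. by case: (s_rules i) => [[]]. Qed.
Lemma s_alpha i : s i (al i) = (al i)^-1. Proof. by case: (s_rules i) => [[]]. Qed.
Lemma s_alpha_neq i j : j != i -> s i (al j) = al j * al i.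
Proof. by case: (s_rules i) => [[_ _ _ sa] _]; apply: sa. Qed.
Lemma s_tau i : s i (ta i) =
  (Q ^- 2 * g ^- 4 * al i ^+ 6 * ta (i + 1) * tb (i + 2) + tb (i + 1) * ta (i + 2))
  / (Q^-1 * g ^- 2 * al i ^+ 3 * tb i).
Proof. by case: (s_rules i) => [_ [-> _ _]]; rewrite ord3_subr1. Qed.
Lemma s_taub i : s i (tb i) =
  (Q ^+ 2 * g ^+ 4 * al i ^+ 6 * tb (i + 1) * ta (i + 2) + ta (i + 1) * tb (i + 2))
  / (Q * g ^+ 2 * al i ^+ 3 * ta i).
Proof. by case: (s_rules i) => [_ [_ -> _]]; rewrite ord3_subr1. Qed.
Lemma s_tau_neq i j : j != i -> s i (ta j) = ta j.
Proof. by case: (s_rules i) => [_ [_ _ sj]] /sj []. Qed.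
Lemma s_taub_neq i j : j != i -> s i (tb j) = tb j.
Proof. by case: (s_rules i) => [_ [_ _ sj]] /sj []. Qed.

Lemma pK : cancel p pinv. Proof. by case: p_aut. Qed.
Lemma pKV : cancel pinv p. Proof. by case: p_aut. Qed.
Lemma p_cst c : p (cst c) = cst c. Proof. by case: p_aut. Qed.
Lemma p_Q : p Q = Q. Proof. by case: p_rules. Qed.
Lemma p_gam : p g = g. Proof. by case: p_rules. Qed.
Lemma p_alpha j : p (al j) = al (j + 1). Proof. by case: p_rules => _ _ pa _ _; apply: pa. Qed.
Lemma p_tau j : p (ta j) = ta (j + 1). Proof. by case: p_rules => _ _ _ pt _; apply: pt. Qed.
Lemma p_taub j : p (tb j) = tb (j + 1). Proof. by case: p_rules => _ _ _ _ pt; apply: pt. Qed.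

Lemma w0K : cancel w0 w0inv. Proof. by case: w0_aut. Qed.
Lemma w0KV : cancel w0inv w0. Proof. by case: w0_aut. Qed.
Lemma w0_cst c : w0 (cst c) = cst c. Proof. by case: w0_aut. Qed.
Lemma w0_Q : w0 Q = Q. Proof. by case: w0_rules. Qed.
Lemma w0_gam : w0 g = g^-1. Proof. by case: w0_rules. Qed.
Lemma w0_alpha j : w0 (al j) = al j. Proof. by case: w0_rules => _ wa _ _ _; apply: wa. Qed.
Lemma w0_tau j : w0 (ta j) = ta j. Proof. by case: w0_rules => _ _ _ wt _; apply: wt. Qed.
Lemma w0_taub i : w0 (tb i) =
  al (i + 1) ^+ 2 * (tb i * ta (i + 1) * ta (i + 2)
    + Q ^- 2 * g ^- 4 * al (i + 2) ^+ 6 * ta i * tb (i + 1) * ta (i + 2)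
    + (Q ^- 2 * g ^- 4 * al (i + 1) ^+ 6)^-1 * ta i * ta (i + 1) * tb (i + 2))
  / (al (i + 2) ^+ 2 * tb (i + 1) * tb (i + 2)).
Proof. by case: w0_rules => _ _ _ _ ->; rewrite ord3_subr1. Qed.

Lemma rK : cancel r rinv. Proof. by case: r_aut. Qed.
Lemma rKV : cancel rinv r. Proof. by case: r_aut. Qed.
Lemma r_cst c : r (cst c) = cst c. Proof. by case: r_aut. Qed.
Lemma r_Q : r Q = Q. Proof. by case: r_rules. Qed.
Lemma r_gam : r g = Q^-1 * g^-1. Proof. by case: r_rules. Qed.
Lemma r_alpha j : r (al j) = al j. Proof. by case: r_rules => _ ra _ _ _; apply: ra. Qed.
Lemma r_tau j : r (ta j) = tb j. Proof. by case: r_rules => _ _ _ rt _; apply: rt. Qed.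
Lemma r_taub j : r (tb j) = ta j. Proof. by case: r_rules => _ _ _ _ rt; apply: rt. Qed.

Lemma s_tau_num_neq0 i :
  al i ^+ 6 * ta (i + 1) * tb (i + 2) + Q ^+ 2 * g ^+ 4 * tb (i + 1) * ta (i + 2) != 0.
Proof.
have : s i (ta i) != 0 by rewrite fmorph_eq0 ta_neq0.
apply: contraNneq => N0; rewrite s_tau.
rewrite (_ : _ + _ = Q ^- 2 * g ^- 4 * (al i ^+ 6 * ta (i + 1) * tb (i + 2)
  + Q ^+ 2 * g ^+ 4 * tb (i + 1) * ta (i + 2))); last by field; rewrite Q_neq0 g_neq0.
by rewrite N0 !(mulr0, mul0r).
Qed.

Lemma s_taub_num_neq0 i :
  Q ^+ 2 * g ^+ 4 * al i ^+ 6 * tb (i + 1) * ta (i + 2) + ta (i + 1) * tb (i + 2) != 0.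
Proof.
have : s i (tb i) != 0 by rewrite fmorph_eq0 tb_neq0.
by apply: contraNneq => N0; rewrite s_taub N0 mul0r.
Qed.

Ltac nz_by_hyp := match goal with
  | H : is_true (?N != 0) |- is_true (?X != 0) => rewrite (_ : X = N); [done | ring]
  end.

Ltac field_nz := field; rewrite ?(Q_neq0, g_neq0, al_neq0, ta_neq0, tb_neq0, oner_neq0);
  repeat (apply/andP; split); rewrite ?andbT //; try nz_by_hyp.

Ltac ord3_neq := first [ by apply: inord3_neq
  | by rewrite ?(ord3_add1_neq, ord3_add2_neq, ord3_neq_add1, ord3_neq_add2,
                 ord3_add21_neq, ord3_add12_neq) ].

Ltac act_simp := do ?[
    progress rewrite ?(rmorphD, rmorphB, rmorphN, rmorphM, fmorphV, rmorphXn, rmorph1)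
  | progress rewrite ?ord3E ?inord3E
  | progress rewrite ?s_Q ?s_gam ?p_Q ?p_gam ?w0_Q ?w0_gam ?r_Q ?r_gam
  | progress rewrite ?p_alpha ?p_tau ?p_taub ?w0_alpha ?w0_tau ?r_alpha ?r_tau ?r_taub
  | progress rewrite ?s_alpha ?s_tau ?s_taub | progress rewrite ?w0_taub
  | rewrite s_alpha_neq; last ord3_neq
  | rewrite s_tau_neq; last ord3_neq
  | rewrite s_taub_neq; last ord3_neq ].

Ltac nonvanishing i := have := s_tau_num_neq0 i; have := s_taub_num_neq0 i;
  have := s_tau_num_neq0 (i + 1); have := s_taub_num_neq0 (i + 1);
  have := s_tau_num_neq0 (i + 2); have := s_taub_num_neq0 (i + 2); rewrite ?ord3E => ? ? ? ? ? ?.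

Lemma s_involutive i : involutive (s i).
Proof.
nonvanishing i.
apply: (morph_eq (f := s i \o s i) (h := idfun)) => [c|||j|j|j] /=;
  rewrite ?(s_cst, p_cst, r_cst, w0_cst) //; try case: (ord3_cases i j) => ->.
all: act_simp => //; field_nz.
Qed.

Lemma s_braid i x : s i (s (i + 1) (s i x)) = s (i + 1) (s i (s (i + 1) x)).
Proof.
nonvanishing i; move: x.
apply: (morph_eq (f := s i \o s (i + 1) \o s i) (h := s (i + 1) \o s i \o s (i + 1)))
  => [c|||j|j|j] /=;
  rewrite ?(s_cst, p_cst, r_cst, w0_cst) //; try case: (ord3_cases i j) => ->.
all: act_simp => //; field_nz.
Qed.

Lemma p_s i x : p (s i x) = s (i + 1) (p x).
Proof.
nonvanishing i; move: x.
apply: (morph_eq (f := p \o s i) (h := s (i + 1) \o p)) => [c|||j|j|j] /=;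
  rewrite ?(s_cst, p_cst, r_cst, w0_cst) //; try case: (ord3_cases i j) => ->.
all: act_simp => //; field_nz.
Qed.

Lemma r_s i x : r (s i x) = s i (r x).
Proof.
nonvanishing i; move: x.
apply: (morph_eq (f := r \o s i) (h := s i \o r)) => [c|||j|j|j] /=;
  rewrite ?(s_cst, p_cst, r_cst, w0_cst) //; try case: (ord3_cases i j) => ->.
all: act_simp => //; field_nz.
Qed.

Lemma r_p x : r (p x) = p (r x).
Proof.
move: x; apply: (morph_eq (f := r \o p) (h := p \o r)) => [c|||j|j|j] /=;
  rewrite ?(s_cst, p_cst, r_cst, w0_cst) //; act_simp => //.
all: field_nz.
Qed.

Lemma w0_p x : w0 (p x) = p (w0 x).
Proof.
move: x; apply: (morph_eq (f := w0 \o p) (h := p \o w0)) => [c|||j|j|j] /=;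
  rewrite ?(s_cst, p_cst, r_cst, w0_cst) //; act_simp => //.
all: field_nz.
Qed.

Lemma w0_taub_num_neq0 i :
  Q ^+ 2 * g ^+ 4 * al (i + 1) ^+ 6 * tb i * ta (i + 1) * ta (i + 2)
  + al (i + 1) ^+ 6 * al (i + 2) ^+ 6 * ta i * tb (i + 1) * ta (i + 2)
  + Q ^+ 4 * g ^+ 8 * ta i * ta (i + 1) * tb (i + 2) != 0.
Proof.
have : w0 (tb i) != 0 by rewrite fmorph_eq0 tb_neq0.
apply: contraNneq => N0; rewrite w0_taub.
set N := (X in X = 0) in N0.
rewrite (_ : _ + _ = (Q ^+ 2 * g ^+ 4 * al (i + 1) ^+ 6)^-1 * N).
  by rewrite N0 !(mulr0, mul0r).
by rewrite /N; field; rewrite Q_neq0 g_neq0 al_neq0.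
Qed.

Lemma w0_s i x : w0 (s i x) = s i (w0 x).
Proof.
nonvanishing i; move: x.
apply: (morph_eq (f := w0 \o s i) (h := s i \o w0)) => [c|||j|j|j] /=;
  rewrite ?(s_cst, p_cst, r_cst, w0_cst) //; try case: (ord3_cases i j) => ->.
all: act_simp => //.
all: try field_nz.
all: rewrite -(alM i); try field_nz.
(* the last denominator is [w0_taub_num] with Q = al i al (i+1) al (i+2), up to a monomial *)
have := w0_taub_num_neq0 i; rewrite -(alM i); apply: contra => /eqP X0.
by apply/eqP; rewrite -[RHS](mulr0 (al (i + 1) ^+ 4 * al (i + 2) ^+ 2)) -X0; ring.
Qed.

Local Notation i0 := (inord 0 : 'I_3).
Local Notation i1 := (inord 1 : 'I_3).
Local Notation i2 := (inord 2 : 'I_3).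

Lemma si_s i x : si i x = s i x.
Proof. by rewrite -{1}(s_involutive i x) sK. Qed.

Lemma pinv_s i x : pinv (s i x) = s (i + 2) (pinv x).
Proof. by apply: (canLR pK); rewrite p_s ord3_add21 pKV. Qed.

Lemma pinv_tau j : pinv (ta j) = ta (j + 2).
Proof. by apply: (canLR pK); rewrite p_tau ord3_add21. Qed.

Lemma pinv_taub j : pinv (tb j) = tb (j + 2).
Proof. by apply: (canLR pK); rewrite p_taub ord3_add21. Qed.

Definition T1 : {rmorphism F -> F} := p \o s i2 \o s i1.
Definition T1inv x := si i1 (si i2 (pinv x)).
Definition T2 : {rmorphism F -> F} := s i1 \o p \o s i2.
Definition T2inv x := si i2 (pinv (si i1 x)).
Definition T4 : {rmorphism F -> F} := r \o w0.
Definition T4inv x := w0inv (rinv x).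

Lemma T1K : cancel T1 T1inv. Proof. by move=> x; rewrite /= /T1inv pK !sK. Qed.
Lemma T1KV : cancel T1inv T1. Proof. by move=> x; rewrite /= /T1inv !sKV pKV. Qed.
Lemma T2K : cancel T2 T2inv. Proof. by move=> x; rewrite /= /T2inv sK pK sK. Qed.
Lemma T2KV : cancel T2inv T2. Proof. by move=> x; rewrite /= /T2inv sKV pKV sKV. Qed.
Lemma T4K : cancel T4 T4inv. Proof. by move=> x; rewrite /= /T4inv rK w0K. Qed.
Lemma T4KV : cancel T4inv T4. Proof. by move=> x; rewrite /= /T4inv w0KV rKV. Qed.

Lemma T1T2 x : T1 (T2 x) = T2 (T1 x).
Proof.
have braid10 y : s i1 (s i0 (s i1 y)) = s i0 (s i1 (s i0 y)).
  by rewrite -inord3_01 s_braid.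
by rewrite /= s_involutive !p_s !inord3E braid10 s_involutive.
Qed.

Lemma T1T4 x : T1 (T4 x) = T4 (T1 x).
Proof. by rewrite /=; do 3 rewrite -?r_s -?r_p -?w0_s -?w0_p. Qed.

Lemma T2T4 x : T2 (T4 x) = T4 (T2 x).
Proof. by rewrite /=; do 3 rewrite -?r_s -?r_p -?w0_s -?w0_p. Qed.

Definition Tr a b c : {rmorphism F -> F} :=
  iterz_rmorphism T1K T1KV a \o iterz_rmorphism T2K T2KV b \o iterz_rmorphism T4K T4KV c.

Lemma TrE a b c x : Tr a b c x = iterz T1 T1inv a (iterz T2 T2inv b (iterz T4 T4inv c x)).
Proof. by []. Qed.

Lemma Tr_comp a b c a' b' c' x :
  Tr a b c (Tr a' b' c' x) = Tr (a + a') (b + b') (c + c') x.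
Proof.
rewrite !TrE (iterz_comm T4K T4KV T1K T1KV (fun y => esym (T1T4 y))).
rewrite (iterz_comm T4K T4KV T2K T2KV (fun y => esym (T2T4 y))).
rewrite (iterz_comm T2K T2KV T1K T1KV (fun y => esym (T1T2 y))).
by rewrite (iterzD T1K T1KV) (iterzD T2K T2KV) (iterzD T4K T4KV).
Qed.

Lemma Tr_decomp a b c x : Tr a b c x = Tr a 0 0 (Tr 0 b 0 (Tr 0 0 c x)).
Proof. by rewrite !Tr_comp !addr0 !add0r. Qed.

Ltac T_simp := rewrite /= ?si_s; act_simp; rewrite ?alM.

Lemma T1_Q : T1 Q = Q. Proof. by T_simp. Qed.
Lemma T2_Q : T2 Q = Q. Proof. by T_simp. Qed.
Lemma T4_Q : T4 Q = Q. Proof. by T_simp. Qed.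
Lemma T1_gam : T1 g = g. Proof. by T_simp. Qed.
Lemma T2_gam : T2 g = g. Proof. by T_simp. Qed.
Lemma T4_gam : T4 g = Q * g. Proof. by T_simp; rewrite invfM !invrK. Qed.
Lemma T4_alpha j : T4 (al j) = al j. Proof. by T_simp. Qed.
Lemma T1_alpha0 : T1 (al i0) = Q * al i0.
Proof. by T_simp; rewrite -(alM i0) !inord3E; ring. Qed.
Lemma T1_alpha1 : T1 (al i1) = Q^-1 * al i1.
Proof. by T_simp; rewrite -(alM i0) !inord3E; field; rewrite !al_neq0. Qed.
Lemma T1_alpha2 : T1 (al i2) = al i2.
Proof. by T_simp; field; rewrite !al_neq0. Qed.
Lemma T2_alpha0 : T2 (al i0) = al i0.
Proof. by T_simp; field; rewrite !al_neq0. Qed.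
Lemma T2_alpha1 : T2 (al i1) = Q * al i1.
Proof. by T_simp; rewrite -(alM i0) !inord3E; ring. Qed.
Lemma T2_alpha2 : T2 (al i2) = Q^-1 * al i2.
Proof. by T_simp; rewrite -(alM i0) !inord3E; field; rewrite !al_neq0. Qed.

Lemma Tr_Q a b c : Tr a b c Q = Q.
Proof. by rewrite TrE (iterz_fix T4K T4_Q) (iterz_fix T2K T2_Q) (iterz_fix T1K T1_Q). Qed.

Lemma Tr_gam a b c : Tr a b c g = Q ^ c * g.
Proof.
have -> : Tr a b c g = Tr a b 0 (Tr 0 0 c g) by rewrite Tr_comp !addr0 add0r.
rewrite [Tr 0 0 c g]TrE !iterz0 (iterz_scale T4K T4KV Q_neq0 T4_Q T4_gam).
by rewrite rmorphM fmorphXz Tr_Q TrE !iterz0 (iterz_fix T2K T2_gam) (iterz_fix T1K T1_gam).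
Qed.

Lemma Tr_alpha0 a b c : Tr a b c (al i0) = Q ^ a * al i0.
Proof.
rewrite !TrE (iterz_fix T4K (T4_alpha i0)) (iterz_fix T2K T2_alpha0).
by rewrite (iterz_scale T1K T1KV Q_neq0 T1_Q T1_alpha0).
Qed.

Lemma Tr_alpha1 a b c : Tr a b c (al i1) = Q ^ (b - a) * al i1.
Proof.
rewrite Tr_decomp (_ : Tr 0 0 c (al i1) = al i1);
  last by rewrite TrE !iterz0 (iterz_fix T4K (T4_alpha i1)).
rewrite (_ : Tr 0 b 0 (al i1) = Q ^ b * al i1); last first.
  by rewrite TrE !iterz0 (iterz_scale T2K T2KV Q_neq0 T2_Q T2_alpha1).
rewrite rmorphM fmorphXz Tr_Q (_ : Tr a 0 0 (al i1) = Q^-1 ^ a * al i1).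
  by rewrite exprz_inv mulrA -expfzDr ?Q_neq0 // addrC.
rewrite TrE !iterz0 (iterz_scale T1K T1KV _ _ T1_alpha1) ?invr_eq0 ?Q_neq0 //.
by rewrite fmorphV T1_Q.
Qed.

Lemma Tr_alpha2 a b c : Tr a b c (al i2) = Q ^ (- b) * al i2.
Proof.
rewrite Tr_decomp (_ : Tr 0 0 c (al i2) = al i2);
  last by rewrite TrE !iterz0 (iterz_fix T4K (T4_alpha i2)).
rewrite (_ : Tr 0 b 0 (al i2) = Q^-1 ^ b * al i2).
  by rewrite rmorphM fmorphXz fmorphV Tr_Q exprz_inv !TrE !iterz0 (iterz_fix T1K T1_alpha2).
rewrite TrE !iterz0 (iterz_scale T2K T2KV _ _ T2_alpha2) ?invr_eq0 ?Q_neq0 //.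
by rewrite fmorphV T2_Q.
Qed.

Lemma Tr_monomial a b c j l e0 e : Tr a b c (al j) = Q ^ l * al j -> e = e0 + 2 * c + 3 * l ->
  Tr a b c (Q ^ e0 * g ^+ 2 * al j ^+ 3) = Q ^ e * g ^+ 2 * al j ^+ 3.
Proof.
move=> Tal De; rewrite !(rmorphXn, rmorphM) fmorphXz Tr_Q Tr_gam Tal.
by apply: (scale_monomial Q_neq0).
Qed.

Lemma Tr_monomialV a b c j l e0 e : Tr a b c (al j) = Q ^ l * al j -> e = e0 - 2 * c + 3 * l ->
  Tr a b c (Q ^ e0 * g ^- 2 * al j ^+ 3) = Q ^ e * g ^- 2 * al j ^+ 3.
Proof.
move=> Tal De; rewrite !(fmorphV, rmorphXn, rmorphM) fmorphXz Tr_Q Tr_gam Tal.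
by apply: (scale_monomialV Q_neq0).
Qed.

Lemma s_taub_three_term i :
  tb (i + 2) * ta (i + 1) - Q ^ 1 * g ^+ 2 * al i ^+ 3 * ta i * s i (tb i)
  + (Q ^ 1 * g ^+ 2 * al i ^+ 3) ^+ 2 * ta (i + 2) * tb (i + 1) = 0.
Proof. by rewrite expr1z s_taub; field; rewrite Q_neq0 g_neq0 al_neq0 ta_neq0. Qed.

Lemma s_tau_three_term i :
  tb (i + 1) * ta (i + 2) - Q ^ (-1) * g ^- 2 * al i ^+ 3 * tb i * s i (ta i)
  + (Q ^ (-1) * g ^- 2 * al i ^+ 3) ^+ 2 * ta (i + 1) * tb (i + 2) = 0.
Proof. by rewrite exprN1 s_tau; field; rewrite Q_neq0 g_neq0 al_neq0 tb_neq0. Qed.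

Local Notation t1 := (ta i1).

Ltac Tr_simp := rewrite !TrE /= /iterz /= /T1inv /T2inv /T4inv ?si_s;
  do ?[ progress rewrite ?pinv_s ?pinv_tau ?pinv_taub ?s_involutive ?inord3E
      | progress rewrite ?p_s ?p_tau ?p_taub ?w0_tau ?r_tau
      | rewrite s_tau_neq; last ord3_neq
      | rewrite s_taub_neq; last ord3_neq ].

Lemma Tr_000 : Tr 0 0 0 t1 = ta i1. Proof. by []. Qed.
Lemma Tr_001 : Tr 0 0 1 t1 = tb i1. Proof. by Tr_simp. Qed.
Lemma Tr_m100 : Tr (-1) 0 0 t1 = ta i0. Proof. by Tr_simp. Qed.
Lemma Tr_m101 : Tr (-1) 0 1 t1 = tb i0. Proof. by Tr_simp. Qed.
Lemma Tr_010 : Tr 0 1 0 t1 = ta i2. Proof. by Tr_simp. Qed.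
Lemma Tr_011 : Tr 0 1 1 t1 = tb i2. Proof. by Tr_simp. Qed.
Lemma Tr_m110 : Tr (-1) 1 0 t1 = s i1 (ta i1). Proof. by Tr_simp. Qed.
Lemma Tr_m111 : Tr (-1) 1 1 t1 = s i1 (tb i1). Proof. by Tr_simp. Qed.
Lemma Tr_110 : Tr 1 1 0 t1 = s i0 (ta i0). Proof. by Tr_simp. Qed.
Lemma Tr_111 : Tr 1 1 1 t1 = s i0 (tb i0). Proof. by Tr_simp. Qed.
Lemma Tr_m1m10 : Tr (-1) (-1) 0 t1 = s i2 (ta i2).
Proof. by Tr_simp; rewrite -inord3_11 s_braid s_involutive s_tau_neq // ord3_add1_neq. Qed.
Lemma Tr_m1m11 : Tr (-1) (-1) 1 t1 = s i2 (tb i2).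
Proof. by Tr_simp; rewrite -inord3_11 s_braid s_involutive s_taub_neq // ord3_add1_neq. Qed.

Local Notation t n m N := (Tr n m N t1).

Lemma bilinear_s1_taub n m N :
  t n m (N + 1) * t (n + 1) (m + 1) N
  - Q ^ (- 3 * n + 3 * m + 2 * N - 2) * g ^+ 2 * al i1 ^+ 3 * t (n + 1) m N * t n (m + 1) (N + 1)
  + Q ^ (- 6 * n + 6 * m + 4 * N - 4) * g ^+ 4 * al i1 ^+ 6 * t n m N * t (n + 1) (m + 1) (N + 1)
  = 0.
Proof.
have := s_taub_three_term i1; rewrite !inord3E -Tr_000 -Tr_m101 -Tr_010 -Tr_m111 -Tr_m100 -Tr_011.
move/(rmorph_three_term (phi := Tr (n + 1) m N)); rewrite !Tr_comp !addr0 !addrK; apply.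
- by apply: Tr_monomial (Tr_alpha1 _ _ _) _; ring.
- by apply: sqr_monomial; ring.
Qed.

Lemma bilinear_s2_taub n m N :
  t (n + 1) m (N + 1) * t n m N
  - Q ^ (- 3 * m + 2 * N + 1) * g ^+ 2 * al i2 ^+ 3 * t (n + 1) (m + 1) N * t n (m - 1) (N + 1)
  + Q ^ (- 6 * m + 4 * N + 2) * g ^+ 4 * al i2 ^+ 6 * t (n + 1) m N * t n m (N + 1) = 0.
Proof.
have := s_taub_three_term i2; rewrite !inord3E -Tr_000 -Tr_m1m11 -Tr_001 -Tr_m100 -Tr_010 -Tr_m101.
move/(rmorph_three_term (phi := Tr (n + 1) m N)); rewrite !Tr_comp !addr0 !addrK; apply.
- by apply: Tr_monomial (Tr_alpha2 _ _ _) _; ring.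
- by apply: sqr_monomial; ring.
Qed.

Lemma bilinear_s0_taub n m N :
  t (n + 1) (m + 1) (N + 1) * t (n + 1) m N
  - Q ^ (3 * n + 2 * N + 4) * g ^+ 2 * al i0 ^+ 3 * t n m N * t (n + 2) (m + 1) (N + 1)
  + Q ^ (6 * n + 4 * N + 8) * g ^+ 4 * al i0 ^+ 6 * t (n + 1) (m + 1) N * t (n + 1) m (N + 1)
  = 0.
Proof.
have := s_taub_three_term i0; rewrite !inord3E -Tr_000 -Tr_111 -Tr_m100 -Tr_011 -Tr_010 -Tr_001.
move/(rmorph_three_term (phi := Tr (n + 1) m N)); rewrite !Tr_comp !addr0 !addrK -addrA; apply.
- by apply: Tr_monomial (Tr_alpha0 _ _ _) _; ring.
- by apply: sqr_monomial; ring.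
Qed.

Lemma bilinear_s1_tau n m N :
  t (n + 1) (m + 1) (N + 1) * t n m N
  - Q ^ (- 3 * n + 3 * m - 2 * N - 4) * g ^- 2 * al i1 ^+ 3 * t (n + 1) m (N + 1) * t n (m + 1) N
  + Q ^ (- 6 * n + 6 * m - 4 * N - 8) * g ^- 4 * al i1 ^+ 6 * t (n + 1) (m + 1) N * t n m (N + 1)
  = 0.
Proof.
have := s_tau_three_term i1; rewrite !inord3E -Tr_m110 -Tr_011 -Tr_m100 -Tr_001 -Tr_010 -Tr_m101.
move/(rmorph_three_term (phi := Tr (n + 1) m N)); rewrite !Tr_comp !addr0 !addrK; apply.
- by apply: Tr_monomialV (Tr_alpha1 _ _ _) _; ring.
- by apply: sqr_monomialV; ring.
Qed.

Lemma bilinear_s2_tau n m N :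
  t n m (N + 1) * t (n + 1) m N
  - Q ^ (- 3 * m - 2 * N - 1) * g ^- 2 * al i2 ^+ 3 * t (n + 1) (m + 1) (N + 1) * t n (m - 1) N
  + Q ^ (- 6 * m - 4 * N - 2) * g ^- 4 * al i2 ^+ 6 * t n m N * t (n + 1) m (N + 1) = 0.
Proof.
have := s_tau_three_term i2; rewrite !inord3E -Tr_000 -Tr_m1m10 -Tr_m101 -Tr_011 -Tr_m100 -Tr_001.
move/(rmorph_three_term (phi := Tr (n + 1) m N)); rewrite !Tr_comp !addr0 !addrK; apply.
- by apply: Tr_monomialV (Tr_alpha2 _ _ _) _; ring.
- by apply: sqr_monomialV; ring.
Qed.

Lemma bilinear_s0_tau n m N :
  t (n + 1) m (N + 1) * t (n + 1) (m + 1) N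
  - Q ^ (3 * n - 2 * N + 2) * g ^- 2 * al i0 ^+ 3 * t n m (N + 1) * t (n + 2) (m + 1) N
  + Q ^ (6 * n - 4 * N + 4) * g ^- 4 * al i0 ^+ 6 * t (n + 1) m N * t (n + 1) (m + 1) (N + 1)
  = 0.
Proof.
have := s_tau_three_term i0; rewrite !inord3E -Tr_000 -Tr_110 -Tr_001 -Tr_010 -Tr_m101 -Tr_011.
move/(rmorph_three_term (phi := Tr (n + 1) m N)); rewrite !Tr_comp !addr0 !addrK -addrA; apply.
- by apply: Tr_monomialV (Tr_alpha0 _ _ _) _; ring.
- by apply: sqr_monomialV; ring.
Qed.

End Action.

Lemma frac_tofrac_div (R : idomainType) (x : {fraction R}) :
  exists a b : R, b != 0 /\ x = tofrac a / tofrac b.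
Proof.
elim/quotW: x => y; exists \n_y, \d_y; split; first exact: denom_ratioP.
apply: (@mulIf _ (tofrac \d_y)); first by rewrite tofrac_eq0 denom_ratioP.
rewrite mulfVK ?tofrac_eq0 ?denom_ratioP //.
unlock tofrac; rewrite /GRing.mul /= !piE; apply/eqmodP.
rewrite /= FracField.equivfE /FracField.mulf.
by rewrite !numden_Ratio ?mulf_neq0 ?oner_neq0 ?denom_ratioP // !mulr1 mulrC.
Qed.

Lemma fracmpoly_morph_eq (R : idomainType) (n : nat) (L : unitRingType)
    (f g : {rmorphism {fraction {mpoly R[n]}} -> L}) :
  (forall c, f (tofrac c%:MP) = g (tofrac c%:MP)) ->
  (forall i, f (tofrac 'X_i) = g (tofrac 'X_i)) ->
  f =1 g.
Proof.
move=> fgC fgX.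
have fg_poly (a : {mpoly R[n]}) : f (tofrac a) = g (tofrac a).
  elim/mpolyind: a => [|c m a _ _ IH]; first by rewrite !rmorph0.
  rewrite !rmorphD IH -mul_mpolyC mpolyXE_id !rmorphM fgC !rmorph_prod.
  by congr (_ * _ + _); apply: eq_bigr => i _; rewrite !rmorphXn fgX.
by move=> x; have [a [b [_ ->]]] := frac_tofrac_div x; rewrite !fmorph_div !fg_poly.
Qed.

Section Generators.
Variable C : numClosedFieldType.
Local Notation K := (K C).
Local Notation i0 := (inord 0 : 'I_3).
Local Notation i1 := (inord 1 : 'I_3).
Local Notation i2 := (inord 2 : 'I_3).

Lemma Gen_neq0 k : (k < 10)%N -> Gen C k != 0.
Proof.
move=> lt_k10; rewrite /Gen tofrac_eq0; apply/eqP => X0.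
have := @mcoeffXU 10 C (inord k) (inord k).
by rewrite X0 mcoeff0 eqxx => /eqP; rewrite eq_sym oner_eq0.
Qed.

Lemma Qv_neq0 : Qv C != 0. Proof. exact: Gen_neq0. Qed.
Lemma gam_neq0 : gam C != 0. Proof. exact: Gen_neq0. Qed.
Lemma tau_neq0 j : tau C j != 0. Proof. by apply: Gen_neq0; case: j => [[|[|[|//]]] ?]. Qed.
Lemma taub_neq0 j : taub C j != 0. Proof. by apply: Gen_neq0; case: j => [[|[|[|//]]] ?]. Qed.
Lemma alpha_neq0 j : alpha C j != 0.
Proof.
rewrite /alpha; case: ifP => _; first exact: Gen_neq0.
case: ifP => _; first exact: Gen_neq0.
by rewrite mulf_neq0 ?invr_eq0 ?mulf_neq0 ?Gen_neq0.
Qed.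

Lemma alpha0 : alpha C i0 = Gen C 1. Proof. by rewrite /alpha /= inordK. Qed.
Lemma alpha1 : alpha C i1 = Gen C 2. Proof. by rewrite /alpha /= inordK. Qed.
Lemma alpha2 : alpha C i2 = Qv C / (Gen C 1 * Gen C 2). Proof. by rewrite /alpha /= inordK. Qed.

Lemma alphaM i : alpha C i * alpha C (i + 1) * alpha C (i + 2) = Qv C.
Proof.
have G1 := @Gen_neq0 1 isT; have G2 := @Gen_neq0 2 isT.
rewrite -[RHS](divfK (mulf_neq0 G1 G2)).
by case: (inord3_cases i) => ->; rewrite !inord3E alpha0 alpha1 alpha2; ring.
Qed.

Lemma K_morph_determined : morph_determined (@cst C) (Qv C) (gam C) (alpha C) (tau C) (taub C).
Proof.
move=> f g fgC fgQ fgg fga fgt fgtb; apply: fracmpoly_morph_eq => // -[k lt_k10].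
have -> : Ordinal lt_k10 = inord k by apply: val_inj; rewrite /= inordK.
change (f (Gen C k) = g (Gen C k)).
case: k lt_k10 => [|[|[|[|[|[|[|[|[|[|//]]]]]]]]]] _.
- exact: fgQ.
- by rewrite -alpha0.
- by rewrite -alpha1.
- exact: fgg.
- by have := fgt i0; rewrite /tau inordK.
- by have := fgt i1; rewrite /tau inordK.
- by have := fgt i2; rewrite /tau inordK.
- by have := fgtb i0; rewrite /taub inordK.
- by have := fgtb i1; rewrite /taub inordK.
- by have := fgtb i2; rewrite /taub inordK.
Qed.

Lemma K_parameter_field : parameter_field (@cst C) (Qv C) (gam C) (alpha C) (tau C) (taub C).
Proof.
split; [split | exact: alphaM | exact: K_morph_determined].
- exact: Qv_neq0.
- exact: gam_neq0.
- exact: alpha_neq0.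
- exact: tau_neq0.
- exact: taub_neq0.
Qed.

End Generators.

Theorem propositionB6 (C : numClosedFieldType)
    (s : 'I_3 -> {rmorphism K C -> K C}) (si : 'I_3 -> K C -> K C)
    (p : {rmorphism K C -> K C}) (pinv : K C -> K C)
    (w0 : {rmorphism K C -> K C}) (w0inv : K C -> K C)
    (w1 : {rmorphism K C -> K C}) (w1inv : K C -> K C)
    (r : {rmorphism K C -> K C}) (rinv : K C -> K C) :
  (forall i, autK (s i) (si i)) -> (forall i, sB6_spec (s i) i) ->
  autK p pinv -> piB6_spec p ->
  autK w0 w0inv -> w0B6_spec w0 ->
  autK w1 w1inv -> w1B6_spec w1 ->
  autK r rinv -> rB6_spec r ->
  let t := tauNM s si p pinv w0 w0inv r rinv in
  let Q := Qv C in let g := gam C in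
  let a0 := alpha C (inord 0) in let a1 := alpha C (inord 1) in
  let a2 := alpha C (inord 2) in
  forall n m N : int,
  (t n m (N + 1) * t (n + 1) (m + 1) N
      - Q ^ (- 3 * n + 3 * m + 2 * N - 2) * g ^+ 2 * a1 ^+ 3
          * t (n + 1) m N * t n (m + 1) (N + 1)
      + Q ^ (- 6 * n + 6 * m + 4 * N - 4) * g ^+ 4 * a1 ^+ 6
          * t n m N * t (n + 1) (m + 1) (N + 1) = 0) /\
    (    t (n + 1) m (N + 1) * t n m N
      - Q ^ (- 3 * m + 2 * N + 1) * g ^+ 2 * a2 ^+ 3
          * t (n + 1) (m + 1) N * t n (m - 1) (N + 1)
      + Q ^ (- 6 * m + 4 * N + 2) * g ^+ 4 * a2 ^+ 6
          * t (n + 1) m N * t n m (N + 1) = 0) /\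
    (    t (n + 1) (m + 1) (N + 1) * t (n + 1) m N
      - Q ^ (3 * n + 2 * N + 4) * g ^+ 2 * a0 ^+ 3
          * t n m N * t (n + 2) (m + 1) (N + 1)
      + Q ^ (6 * n + 4 * N + 8) * g ^+ 4 * a0 ^+ 6
          * t (n + 1) (m + 1) N * t (n + 1) m (N + 1) = 0) /\
    (    t (n + 1) (m + 1) (N + 1) * t n m N
      - Q ^ (- 3 * n + 3 * m - 2 * N - 4) * g ^- 2 * a1 ^+ 3
          * t (n + 1) m (N + 1) * t n (m + 1) N
      + Q ^ (- 6 * n + 6 * m - 4 * N - 8) * g ^- 4 * a1 ^+ 6
          * t (n + 1) (m + 1) N * t n m (N + 1) = 0) /\
    (    t n m (N + 1) * t (n + 1) m N
      - Q ^ (- 3 * m - 2 * N - 1) * g ^- 2 * a2 ^+ 3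
          * t (n + 1) (m + 1) (N + 1) * t n (m - 1) N
      + Q ^ (- 6 * m - 4 * N - 2) * g ^- 4 * a2 ^+ 6
          * t n m N * t (n + 1) m (N + 1) = 0) /\
    (t (n + 1) m (N + 1) * t (n + 1) (m + 1) N
      - Q ^ (3 * n - 2 * N + 2) * g ^- 2 * a0 ^+ 3
          * t n m (N + 1) * t (n + 2) (m + 1) N
      + Q ^ (6 * n - 4 * N + 4) * g ^- 4 * a0 ^+ 6
          * t (n + 1) m N * t (n + 1) (m + 1) (N + 1) = 0).
Proof.
(* [w1] does not enter [tauNM]; the latter unfolds to [Tr n m N (tau C (inord 1))]. *)
move=> sA sS pA pS w0A w0S _ _ rA rS t Q g a0 a1 a2 n m N.
have params := K_parameter_field C.
have action :
    B6_action (@cst C) (Qv C) (gam C) (alpha C) (tau C) (taub C) s si p pinv w0 w0inv r rinv.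
  by split=> [i|||]; split;
    [exact: sA | exact: sS | exact: pA | exact: pS
    | exact: w0A | exact: w0S | exact: rA | exact: rS].
split; [|split; [|split; [|split; [|split]]]].
- exact: (bilinear_s1_taub params action).
- exact: (bilinear_s2_taub params action).
- exact: (bilinear_s0_taub params action).
- exact: (bilinear_s1_tau params action).
- exact: (bilinear_s2_tau params action).
- exact: (bilinear_s0_tau params action).
Qed.
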